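(* Let $i\ge 1$ be an integer and let $H$ be a weighted graph. Let $B_1,B_2,P$ be sets of vertices of $H$ such that $d(B_1,B_2)\ge 2i+2$ and $H[P]$ is connected. If both $N^i[B_1\cup P]$ and $N^i[B_2\cup P]$ are weighted bipartite, then $N^i[B_1\cup B_2\cup P]$ is weighted bipartite.
   Context: A weighted graph is a graph with a weight function $\omega:E(H)\to\mathbb{N}$; the weight of a subgraph is the sum of its edge weights. $d(B_1,B_2)$ is the unweighted distance, i.e. the minimum number of edges of a path between a vertex of $B_1$ and a vertex of $B_2$. $N^i[S]$ is the set of vertices at unweighted distance at most $i$ from some vertex of $S$. A vertex set $S$ is weighted bipartite if $H[S]$ contains no cycle of odd weight. *)

(* Finite simple graphs: vertex type T : finType,
   adjacency e : rel T (symmetric, irreflexive), edge weights w : T -> T -> nat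
   (symmetric, so it is a function on the unordered edges; only its values on
   edges matter). *)
From mathcomp Require Import all_boot.
Set Implicit Arguments. Unset Strict Implicit. Unset Printing Implicit Defensive.

Section Graphs.
Variable T : finType.
Variable e : rel T.

(* a walk from x to y with at most k edges *)
Definition within (k : nat) (x y : T) : bool :=
  [exists m : 'I_k.+1, [exists p : k.-tuple T,
     path e x (take m p) && (last x (take m p) == y)]].

Definition nbhd (k : nat) (S : {set T}) : {set T} :=
  [set v | [exists u in S, within k u v]].

Definition dist_ge (k : nat) (B1 B2 : {set T}) : Prop :=
  forall x y, x \in B1 -> y \in B2 -> forall m, m < k -> ~~ within m x y.

Definition induced (S : {set T}) : rel T :=
  [rel x y | [&& e x y, x \in S & y \in S]].

Definition induced_connected (S : {set T}) : Prop :=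
  forall x y, x \in S -> y \in S -> connect (induced S) x y.

Variable w : T -> T -> nat.

(* the cycle x :: p (closing edge from last vertex back to x) in H[S]:
   at least 3 distinct vertices, consecutive ones adjacent in H[S] *)
Definition is_cycle_in (S : {set T}) (x : T) (p : seq T) : Prop :=
  [/\ 2 <= size p, uniq (x :: p) & path (induced S) x (rcons p x)].

Definition cycle_weight (x : T) (p : seq T) : nat :=
  sumn (pairmap w x (rcons p x)).

Definition weighted_bipartite (S : {set T}) : Prop :=
  forall x p, is_cycle_in S x p -> ~~ odd (cycle_weight x p).

End Graphs.

From mathcomp Require Import all_boot zify.
Set Implicit Arguments. Unset Strict Implicit. Unset Printing Implicit Defensive.

(* A set S is weighted bipartite exactly when it carries a parity labeling
   c : T -> bool with odd (w x y) = c x (+) c y on every edge of H[S]: take for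
   c v the parity of a walk in H[S] from a fixed root of the component of v,
   which is well defined because closed walks decompose into cycles.
   Labelings of N^i[B1 ∪ P] and N^i[B2 ∪ P] can then be glued.  These sets meet
   in N^i[P], as N^i[B1] and N^i[B2] are disjoint, and H[N^i[P]] is connected,
   so the sum of the two labelings is constant there and one of them can be
   shifted to agree with the other; the only remaining edges, between N^i[B1]
   and N^i[B2], are excluded by d(B1, B2) >= 2i + 2. *)

Section WalkParity.
Variables (T : finType) (e : rel T) (w : T -> T -> nat).

Definition walk_weight (x : T) (p : seq T) : nat := sumn (pairmap w x p).

Lemma walk_weight_cat x p q :
  walk_weight x (p ++ q) = walk_weight x p + walk_weight (last x p) q.
Proof. by rewrite /walk_weight pairmap_cat sumn_cat. Qed.

Definition parity_labeling (S : {set T}) (c : T -> bool) : Prop :=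
  forall x y, induced e S x y -> odd (w x y) = c x (+) c y.

Lemma parity_labeling_walk S c x p : parity_labeling S c ->
  path (induced e S) x p -> odd (walk_weight x p) = c x (+) c (last x p).
Proof.
move=> cS; elim: p x => [|y p IHp] x /=; first by rewrite addbb.
case/andP=> /cS Exy /IHp; rewrite /walk_weight /= oddD Exy => ->.
by rewrite addbA -(addbA (c x)) addbb addbF.
Qed.

Lemma parity_labeling_bipartite S c :
  parity_labeling S c -> weighted_bipartite e w S.
Proof.
move=> cS x p [_ _ Sp]; rewrite /cycle_weight -/(walk_weight x _).
by rewrite (parity_labeling_walk cS Sp) last_rcons addbb.
Qed.

Lemma not_uniq_loop x q : ~~ uniq (x :: q) ->
  exists a b c : seq T,
    [/\ q = a ++ b ++ c, b != [::] & last (last x a) b = last x a].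
Proof.
elim: q x => // z q IHq x; rewrite [uniq _]/= negb_and negbK in_cons.
case/orP=> [/orP[/eqP<- | /splitPr[q1 q2]] | /IHq[a [b [c [-> nb Lb]]]]].
- by exists [::], [:: x], q.
- by exists [::], (z :: rcons q1 x), q2; rewrite /= cat_rcons last_rcons.
- by exists (z :: a), b, c.
Qed.

Hypotheses (e_irr : irreflexive e) (w_sym : forall x y, w x y = w y x).

(* A closed walk that is not a cycle splits at a repeated vertex into two
   shorter closed walks. *)
Lemma bipartite_closed_walk_even S : weighted_bipartite e w S ->
  forall x p, path (induced e S) x p -> last x p = x -> ~~ odd (walk_weight x p).
Proof.
move=> bipS x p; have [n] := ubnP (size p); elim: n x p => // n IHn x p.
case/lastP: p => [|q z]; first by rewrite /walk_weight.
rewrite size_rcons ltnS last_rcons => lt_q_n Sp zx; subst z.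
have [Uq | /not_uniq_loop[a [b [c [Eq nb Lb]]]]] := boolP (uniq (x :: q)).
  case: q Uq Sp {lt_q_n} => [|z [|z' q]] Uq Sp.
  - by move: Sp; rewrite /= /induced /= e_irr.
  - by rewrite /walk_weight /= addn0 w_sym addnn odd_double.
  - exact: (bipS x [:: z, z' & q]).
move: Sp; rewrite Eq rcons_cat rcons_cat !cat_path Lb => /and3P[Sa Sb Sc].
rewrite !walk_weight_cat Lb !oddD.
have {}Sac : path (induced e S) x (a ++ rcons c x) by rewrite cat_path Sa.
have b_gt0 : 0 < size b by rewrite lt0n size_eq0.
have /IHn/(_ Sac) : size (a ++ rcons c x) < n.
  by move: lt_q_n; rewrite Eq !size_cat size_rcons; lia.
have /IHn/(_ Sb Lb)/negbTE-> : size b < n.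
  by move: lt_q_n; rewrite Eq !size_cat; lia.
by rewrite walk_weight_cat last_cat last_rcons oddD; apply.
Qed.

Hypothesis e_sym : symmetric e.

Lemma induced_sym S : symmetric (induced e S).
Proof. by move=> x y; rewrite /induced /= e_sym [(x \in S) && _]andbC. Qed.

Section RootParity.
Variable S : {set T}.

Local Notation root := (root (induced e S)).

Lemma walk_from_root v :
  exists p, path (induced e S) (root v) p && (last (root v) p == v).
Proof.
have /connectP[p Sp Lp] : connect (induced e S) (root v) v.
  by rewrite (sym_connect_sym (induced_sym S)) connect_root.
by exists p; rewrite Sp -Lp eqxx.
Qed.

(* Closed walks being even, any other walk from the root would do as well. *)
Definition root_parity v : bool :=
  odd (walk_weight (root v) (xchoose (walk_from_root v))).

Lemma root_parity_labeling :
  weighted_bipartite e w S -> parity_labeling S root_parity.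
Proof.
move=> bipS u v Suv; rewrite /root_parity.
have ruv : root u = root v.
  exact/(rootP (sym_connect_sym (induced_sym S)))/connect1.
have /andP[Spu /eqP Lpu] := xchooseP (walk_from_root u).
have /andP[Spv /eqP Lpv] := xchooseP (walk_from_root v).
set pu := xchoose _ in Spu Lpu *; set pv := xchoose _ in Spv Lpv *.
have /connectP[qv Sqv Lqv] := connect_root (induced e S) v.
rewrite ruv in Spu Lpu *.
(* Both closed walks below return to the root along the same walk [qv]. *)
have := bipartite_closed_walk_even bipS (x := root v) (p := pu ++ v :: qv).
rewrite cat_path Spu Lpu /= Suv Sqv last_cat Lpu /= -Lqv => /(_ isT erefl).
have := bipartite_closed_walk_even bipS (x := root v) (p := pv ++ qv).
rewrite cat_path Spv Lpv Sqv last_cat Lpv -Lqv => /(_ isT erefl).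
rewrite !walk_weight_cat Lpu Lpv /walk_weight /= !oddD.
by case: odd; case: odd; case: odd; case: odd.
Qed.

End RootParity.

Lemma bipartite_parity_labeling S :
  weighted_bipartite e w S -> exists c, parity_labeling S c.
Proof. by move=> bipS; exists (root_parity S); apply: root_parity_labeling. Qed.

Section Gluing.
Variables (X Y : {set T}) (cX cY : T -> bool).
Hypotheses (cXX : parity_labeling X cX) (cYY : parity_labeling Y cY).
Hypothesis no_cross_edge :
  forall x y, x \in X :\: Y -> y \in Y :\: X -> ~~ e x y.

Lemma parity_labeling_diff_const : induced_connected e (X :&: Y) ->
  {in X :&: Y &, forall a b, cX a (+) cY a = cX b (+) cY b}.
Proof.
move=> XYconn a b XYa XYb.
have closed_diff : closed (induced e (X :&: Y)) [pred v | cX v (+) cY v].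
  move=> u v /and3P[Euv]; rewrite !inE => /andP[Xu Yu] /andP[Xv Yv].
  have := @cXX u v; have := @cYY u v.
  rewrite /induced /= Euv Xu Xv Yu Yv => /(_ isT)-> /(_ isT).
  by case: (cX u); case: (cX v); case: (cY u); case: (cY v).
exact: closed_connect closed_diff _ _ (XYconn a b XYa XYb).
Qed.

Lemma parity_labeling_setU k : {in X :&: Y, forall v, cX v (+) cY v = k} ->
  parity_labeling (X :|: Y) (fun v => if v \in X then cX v else cY v (+) k).
Proof.
move=> cXYk.
have mixed u v : u \in X -> v \notin X -> induced e (X :|: Y) u v ->
    odd (w u v) = cX u (+) (cY v (+) k).
  move=> Xu Xv /and3P[Euv _]; rewrite inE (negbTE Xv) /= => Yv.
  have Yu : u \in Y.
    by apply: contraTT Euv => Yu; apply: no_cross_edge; rewrite inE ?Xu ?Yu ?Xv.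
  rewrite cYY; last by rewrite /induced /= Euv Yu Yv.
  rewrite -(cXYk u); last by rewrite inE Xu.
  by case: (cX u); case: (cY u); case: (cY v).
move=> u v XYuv; have /and3P[Euv XYu XYv] := XYuv.
case: (boolP (u \in X)) => Xu; case: (boolP (v \in X)) => Xv.
- by apply: cXX; rewrite /induced /= Euv Xu Xv.
- exact: mixed.
- by rewrite w_sym addbC; apply: mixed; rewrite // induced_sym.
- move: XYu XYv; rewrite !inE (negbTE Xu) (negbTE Xv) /= => Yu Yv.
  rewrite cYY; last by rewrite /induced /= Euv Yu Yv.
  by rewrite addbACA addbb addbF.
Qed.

End Gluing.

Lemma bipartite_setU X Y :
  weighted_bipartite e w X -> weighted_bipartite e w Y ->
  induced_connected e (X :&: Y) ->
  (forall x y, x \in X :\: Y -> y \in Y :\: X -> ~~ e x y) ->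
  weighted_bipartite e w (X :|: Y).
Proof.
move=> /bipartite_parity_labeling[cX cXX] /bipartite_parity_labeling[cY cYY].
move=> XYconn no_cross_edge.
have [k cXYk] : exists k, {in X :&: Y, forall v, cX v (+) cY v = k}.
  case: (set_0Vmem (X :&: Y)) => [-> | [a XYa]].
    by exists false; move=> v; rewrite in_set0.
  exists (cX a (+) cY a); move=> v XYv.
  exact: parity_labeling_diff_const cXX cYY XYconn v a XYv XYa.
exact: parity_labeling_bipartite (parity_labeling_setU cXX cYY no_cross_edge cXYk).
Qed.

End WalkParity.

Section Neighbourhoods.
Variables (T : finType) (e : rel T).

Lemma withinP k x y :
  reflect (exists2 p, size p <= k & path e x p && (last x p == y))
          (within e k x y).
Proof.
apply: (iffP existsP) => [[m /existsP[t /andP[xt ty]]] | [p le_p_k /andP[xp py]]].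
  by exists (take m t); rewrite ?xt // size_take_min size_tuple geq_minr.
have pad : size (take k (p ++ nseq k x)) == k.
  by rewrite size_takel // size_cat size_nseq leq_addl.
exists (Ordinal (le_p_k : size p < k.+1)); apply/existsP; exists (Tuple pad).
by rewrite /= take_takel // take_size_cat // xp py.
Qed.

Lemma within_refl k x : within e k x x.
Proof. by apply/withinP; exists [::]; rewrite //= eqxx. Qed.

Lemma within_edge x y : e x y -> within e 1 x y.
Proof. by move=> xy; apply/withinP; exists [:: y]; rewrite //= xy eqxx. Qed.

Lemma within_cat j k x y z :
  within e j x y -> within e k y z -> within e (j + k) x z.
Proof.
move=> /withinP[p le_p_j /andP[xp /eqP py]] /withinP[q le_q_k /andP[yq qz]].
apply/withinP; exists (p ++ q); first by rewrite size_cat leq_add.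
by rewrite cat_path last_cat xp py yq.
Qed.

Lemma in_nbhd k (S : {set T}) v :
  (v \in nbhd e k S) = [exists u in S, within e k u v].
Proof. by rewrite inE. Qed.

Lemma nbhdU k (A B : {set T}) : nbhd e k (A :|: B) = nbhd e k A :|: nbhd e k B.
Proof.
apply/setP=> v; rewrite in_setU !in_nbhd; apply/exists_inP/orP.
  by case=> u; rewrite inE => /orP[] Au uv; [left | right]; apply/exists_inP; exists u.
by case=> /exists_inP[u Au uv]; exists u; rewrite // inE Au ?orbT.
Qed.

Lemma dist_geW j k (B1 B2 : {set T}) :
  j <= k -> dist_ge e k B1 B2 -> dist_ge e j B1 B2.
Proof.
move=> le_jk dB x y B1x B2y m lt_mj.
exact: dB _ _ B1x B2y _ (leq_trans lt_mj le_jk).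
Qed.

Lemma nbhd_path k (P : {set T}) x p : x \in P -> path e x p -> size p <= k ->
  path (induced e (nbhd e k P)) x p.
Proof.
move=> Px xp le_p_k.
have Np : all (mem (nbhd e k P)) (x :: p).
  apply/allP=> v vp; move: xp le_p_k; case/splitPl: vp => p1 p2 p1v.
  rewrite cat_path size_cat => /andP[xp1 _] le_p_k /=; rewrite in_nbhd.
  apply/exists_inP; exists x => //; apply/withinP; exists p1.
    by apply: leq_trans le_p_k; apply: leq_addr.
  by rewrite xp1 p1v eqxx.
apply: sub_in_path Np xp => a b Na Nb ab.
by rewrite /induced /= ab Na Nb.
Qed.

Hypothesis e_sym : symmetric e.

Lemma within_sym k : symmetric (within e k).
Proof.
suff within_rev x y : within e k x y -> within e k y x.
  by move=> x y; apply/idP/idP; apply: within_rev.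
case/withinP=> p le_p_k /andP[xp /eqP <-]; apply/withinP.
exists (rev (belast x p)); first by rewrite size_rev size_belast.
rewrite rev_path (eq_path (_ : _ =2 e)) ?xp; last by move=> a b; apply: e_sym.
by case/lastP: p {xp le_p_k} => //= q z; rewrite belast_rcons rev_cons last_rcons.
Qed.

Lemma nbhd_dist_ge j k m (B1 B2 : {set T}) u v :
  dist_ge e (j + m + k).+1 B1 B2 ->
  u \in nbhd e j B1 -> v \in nbhd e k B2 -> ~~ within e m u v.
Proof.
rewrite !in_nbhd => dB /exists_inP[b1 B1b1 b1u] /exists_inP[b2 B2b2 b2v].
apply/negP => uv.
have := dB b1 b2 B1b1 B2b2 _ (ltnSn _); rewrite within_sym in b2v.
by rewrite (within_cat (within_cat b1u uv) b2v).
Qed.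

Lemma nbhd_connected k (P : {set T}) :
  induced_connected e P -> induced_connected e (nbhd e k P).
Proof.
move=> Pconn; set N := nbhd e k P.
have PN : {subset P <= N}.
  by move=> v Pv; rewrite in_nbhd; apply/exists_inP; exists v; rewrite ?within_refl.
have from_P v : v \in N -> exists2 p0, p0 \in P & connect (induced e N) p0 v.
  rewrite in_nbhd => /exists_inP[p0 Pp0 /withinP[p le_p_k /andP[p0p /eqP <-]]].
  by exists p0 => //; apply/connectP; exists p => //; apply: nbhd_path.
move=> a b /from_P[pa Ppa pa_a] /from_P[pb Ppb pb_b].
rewrite (sym_connect_sym (induced_sym e_sym N)) in pa_a.
apply: connect_trans pa_a (connect_trans _ pb_b).
apply: connect_sub (Pconn _ _ Ppa Ppb) => x y /and3P[xy Px Py].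
by apply: connect1; rewrite /induced /= xy !PN.
Qed.

End Neighbourhoods.

Theorem lemma4p3 (T : finType) (e : rel T) (w : T -> T -> nat)
  (e_sym : symmetric e) (e_irr : irreflexive e)
  (w_sym : forall x y, w x y = w y x)
  (i : nat) (hi : 1 <= i) (B1 B2 P : {set T}) :
  dist_ge e (2 * i + 2) B1 B2 ->
  induced_connected e P ->
  weighted_bipartite e w (nbhd e i (B1 :|: P)) ->
  weighted_bipartite e w (nbhd e i (B2 :|: P)) ->
  weighted_bipartite e w (nbhd e i (B1 :|: B2 :|: P)).
Proof.
move=> dB Pconn bip1 bip2.
have N12 : nbhd e i B1 :&: nbhd e i B2 = set0.
  apply/setP=> v; rewrite in_set0 inE; apply/negbTE/andP=> -[N1v N2v].
  have dB' : dist_ge e (i + 0 + i).+1 B1 B2 by apply: dist_geW dB; lia.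
  by have := nbhd_dist_ge e_sym dB' N1v N2v; rewrite within_refl.
have -> : nbhd e i (B1 :|: B2 :|: P) = nbhd e i (B1 :|: P) :|: nbhd e i (B2 :|: P).
  by rewrite !nbhdU setUACA setUid.
apply: bipartite_setU => //.
  by rewrite !nbhdU -setUIl N12 set0U; apply: nbhd_connected.
move=> x y; rewrite !nbhdU !in_setD !in_setU.
move=> /andP[/norP[_ /negbTE xN]]; rewrite xN orbF => N1x.
move=> /andP[/norP[_ /negbTE yN]]; rewrite yN orbF => N2y.
have dB' : dist_ge e (i + 1 + i).+1 B1 B2 by apply: dist_geW dB; lia.
exact: contraNN (@within_edge _ e x y) (nbhd_dist_ge e_sym dB' N1x N2y).
Qed.
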